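(* Let $G$ be a non-trivial graph with $m$ edges and maximum degree $\Delta$, and let $\mathcal{L}(G)$ be its line graph. Then $$ GA_1(G) + GA_1(\mathcal{L}(G)) \le \frac{1}{2}\, \max \big\{2\Delta^2 +m^2 +(6-2\Delta) m - 2\Delta -4\,,\; 2\Delta^2 +m^2 +(4-2\Delta) m + 4 \,,\; m(m-1) \big\} . $$
   Context: All graphs are finite and simple. A graph is non-trivial if each of its connected components has at least two edges. $d_u$ is the degree of $u$. The geometric-arithmetic index is $GA_1(G)=\sum_{uv\in E(G)}\frac{\sqrt{d_ud_v}}{\frac12(d_u+d_v)}$. The line graph $\mathcal{L}(G)$ has vertex set $E(G)$, two vertices being adjacent iff the corresponding edges share an end vertex in $G$. *)

From HB Require Import structures.
From mathcomp Require Import all_boot all_order all_algebra.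
Set Implicit Arguments. Unset Strict Implicit. Unset Printing Implicit Defensive.
Import Order.TTheory GRing.Theory Num.Theory.

Definition simple_graph (T : finType) (e : rel T) : Prop :=
  symmetric e /\ irreflexive e.

Definition edges (T : finType) (e : rel T) : {set {set T}} :=
  [set A : {set T} | [exists x, exists y, e x y && (A == [set x; y])]].

Definition nedges (T : finType) (e : rel T) : nat := #|edges e|.

Definition deg (T : finType) (e : rel T) (u : T) : nat := #|[set v | e u v]|.

Definition maxdeg (T : finType) (e : rel T) : nat := \max_(v : T) deg e v.

Definition component (T : finType) (e : rel T) (v : T) : {set T} :=
  [set w | connect e v w].

Definition nontrivial (T : finType) (e : rel T) : Prop :=
  forall v : T, 2 <= #|[set A in edges e | A \subset component e v]|.

Definition GA1 (R : rcfType) (T : finType) (e : rel T) : R :=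
  \sum_(A in edges e)
     Num.sqrt ((\prod_(x in A) deg e x)%:R) /
     ((\sum_(x in A) deg e x)%:R / 2%:R).

Definition line_vertex (T : finType) (e : rel T) : finType :=
  {A : {set T} | A \in edges e}.

Definition line_rel (T : finType) (e : rel T) : rel (line_vertex e) :=
  fun A B => (val A != val B) && (val A :&: val B != set0).
Arguments line_rel {T} e.

From HB Require Import structures.
From mathcomp Require Import all_boot all_order all_algebra.
From mathcomp Require Import lra.
Set Implicit Arguments.
Unset Strict Implicit.
Unset Printing Implicit Defensive.
Import Order.TTheory GRing.Theory Num.Theory.

(* Every term of GA1 compares a geometric with an arithmetic mean, so GA1 of a
   graph is at most its number of edges, and it suffices to bound m + |E(L(G))|.
   In L(G) an edge f is adjacent to all other edges except those disjoint from
   it, so 2|E(L(G))| = m(m-1) minus the number of ordered disjoint pairs.  For a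
   vertex v of maximum degree D, each of the at least m - D edges avoiding v is
   disjoint from at least D - 2 edges through v; counting these pairs in both
   orders gives 2|E(L(G))| <= m(m-1) - 2(m-D)(D-2), which is the first branch of
   the maximum when D >= 2.  For D <= 1 the bound 2|E(L(G))| <= m(m-1) gives the
   second branch. *)

Section Means.
Local Open Scope ring_scope.
Variable R : rcfType.

Lemma sqrt_mul_le_mean (a b : R) : 0 <= a -> 0 <= b ->
  Num.sqrt (a * b) <= (a + b) / 2.
Proof.
move=> a_ge0 b_ge0; have mean_ge0 : 0 <= (a + b) / 2 by lra.
rewrite -(ger0_norm mean_ge0) -sqrtr_sqr; apply: ler_wsqrtr.
have : 0 <= (a - b) ^+ 2 by exact: sqr_ge0.
rewrite !expr2; lra.
Qed.

Lemma geo_div_arith_mean_le1 (a b : R) : 0 <= a -> 0 <= b ->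
  Num.sqrt (a * b) / ((a + b) / 2) <= 1.
Proof.
move=> a_ge0 b_ge0; have [mean0 | mean_neq0] := eqVneq ((a + b) / 2) 0.
  by rewrite mean0 invr0 mulr0.
rewrite ler_pdivrMr ?mul1r ?sqrt_mul_le_mean // lt_def mean_neq0; lra.
Qed.

End Means.

Lemma set2r_inj (T : finType) (x : T) :
  {in [pred u | u != x] &, injective (fun u => [set x; u])}.
Proof.
move=> u u' ux _ /setP /(_ u); rewrite !inE eqxx orbT.
move=> /esym /orP[/eqP ux'|/eqP //].
by move: ux; rewrite inE ux' eqxx.
Qed.

Section SimpleGraph.
Variables (T : finType) (e : rel T).

Lemma edgesP (A : {set T}) :
  reflect (exists x y, e x y /\ A = [set x; y]) (A \in edges e).
Proof.
rewrite inE; apply: (iffP existsP) => [[x /existsP[y /andP[exy /eqP ->]]]|].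
  by exists x, y.
by case=> x [y [exy ->]]; exists x; apply/existsP; exists y; rewrite exy eqxx.
Qed.

Lemma edge_neq0 (A : {set T}) : A \in edges e -> A != set0.
Proof.
by case/edgesP=> x [y [_ ->]]; apply/set0Pn; exists x; rewrite !inE eqxx.
Qed.

Hypotheses (e_sym : symmetric e) (e_irr : irreflexive e).

Lemma edge_neq (x y : T) : e x y -> x != y.
Proof. by apply: contraTneq => ->; rewrite e_irr. Qed.

Lemma double_nedges_le_sum_deg : 2 * nedges e <= \sum_v deg e v.
Proof.
have -> : \sum_v deg e v = \sum_(p : T * T | e p.1 p.2) 1.
  rewrite -(pair_big_dep xpredT e (fun _ _ => 1)).
  by apply: eq_bigr => v _; rewrite sum1dep_card.
rewrite (partition_big (fun p => [set p.1; p.2]) (mem (edges e))); last first.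
  by move=> p exy; apply/edgesP; exists p.1, p.2.
rewrite mulnC -sum_nat_const; apply: leq_sum => _ /edgesP[x [y [exy ->]]].
rewrite sum1dep_card (@leq_trans #|[set (x, y); (y, x)]|) //.
  by rewrite cards2 xpair_eqE negb_and edge_neq.
apply/subset_leq_card/subsetP => p; rewrite !inE => /orP[] /eqP -> /=.
  by rewrite exy eqxx.
by rewrite e_sym exy setUC eqxx.
Qed.

Lemma maxdeg_attained : 0 < maxdeg e -> exists v, deg e v = maxdeg e.
Proof.
move=> maxdeg_gt0; have [v0 _ | T_empty] := pickP (fun _ : T => true).
  have T_gt0 : 0 < #|T| by apply/card_gt0P; exists v0.
  by rewrite /maxdeg; have [v ->] := bigop.eq_bigmax (deg e) T_gt0; exists v.
suff : maxdeg e <= 0 by rewrite leqNgt maxdeg_gt0.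
by apply/bigmax_leqP => v; have := T_empty v.
Qed.

Lemma GA1_le_nedges (R : rcfType) : (GA1 R e <= (nedges e)%:R)%R.
Proof.
rewrite /GA1 /nedges -sum1_card natr_sum.
apply: ler_sum => _ /edgesP[x [y [exy ->]]].
rewrite !big_setU1 ?inE ?edge_neq //= !big_set1 natrM natrD.
by apply: geo_div_arith_mean_le1; rewrite ler0n.
Qed.

End SimpleGraph.

Section LineGraph.
Variables (T : finType) (e : rel T).

Lemma line_vertex_edge (f : line_vertex e) : val f \in edges e.
Proof. exact: valP. Qed.

Lemma card_line_vertex : #|{: line_vertex e}| = nedges e.
Proof. by rewrite card_sig; apply: eq_card => A; rewrite !inE. Qed.

Lemma card_line_vertex_set (P : pred {set T}) :
  #|[set f : line_vertex e | P (val f)]| = #|[set A in edges e | P A]|.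
Proof.
rewrite -(card_imset _ val_inj); apply: eq_card => A; rewrite [RHS]inE.
apply/imsetP/andP => [[f] | [A_edge PA]].
  by rewrite inE => Pf ->; split; first exact: line_vertex_edge.
by exists (Sub A A_edge); rewrite ?inE SubK.
Qed.

Lemma line_graph_simple : simple_graph (line_rel e).
Proof. by split=> [f g | f]; rewrite /line_rel ?eqxx // eq_sym setIC. Qed.

Definition disjoint_edges (f : line_vertex e) : {set line_vertex e} :=
  [set g | val f :&: val g == set0].

Lemma deg_line_add_disjoint (f : line_vertex e) :
  deg (line_rel e) f + #|disjoint_edges f| = (nedges e).-1.
Proof.
have disj_sub : disjoint_edges f \subset [set~ f].
  apply/subsetP => g; rewrite !inE; apply: contraTneq => gf.
  by rewrite gf setIid (edge_neq0 (line_vertex_edge f)).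
have nbhd : [set g | line_rel e f g] = [set~ f] :\: disjoint_edges f.
  by apply/setP => g; rewrite !inE /line_rel andbC (inj_eq val_inj) (eq_sym g).
have := cardsID (disjoint_edges f) [set~ f].
by rewrite (setIidPr disj_sub) cardsC1 card_line_vertex addnC /deg nbhd => <-.
Qed.

Lemma double_line_nedges_le :
  2 * nedges (line_rel e) <= nedges e * (nedges e).-1.
Proof.
have [line_sym line_irr] := line_graph_simple.
apply: (leq_trans (double_nedges_le_sum_deg line_sym line_irr)).
rewrite -card_line_vertex -sum_nat_const card_line_vertex.
by apply: leq_sum => f _; rewrite -(deg_line_add_disjoint f) leq_addr.
Qed.

Hypotheses (e_sym : symmetric e) (e_irr : irreflexive e).
Variable v : T.

Definition edges_avoiding : {set line_vertex e} :=
  [set f : line_vertex e | v \notin val f].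

Lemma deg_sub2_le_disjoint_at (f : line_vertex e) : v \notin val f ->
  deg e v - 2 <= #|[set g in disjoint_edges f | v \in val g]|.
Proof.
move=> vNf; set N := [set u | e v u].
have card_f : #|val f| <= 2.
  case/edgesP: (line_vertex_edge f) => x [y [_ ->]].
  by rewrite cards2; case: (_ != _).
have deg_sub2 : deg e v - 2 <= #|N :\: val f|.
  by rewrite cardsD leq_sub2l // (leq_trans (subset_leq_card (subsetIr _ _))).
rewrite (leq_trans deg_sub2) //.
rewrite -(card_in_imset (f := fun u => [set v; u])); last first.
  move=> u u' /setDP[+ _] /setDP[+ _]; rewrite !inE.
  move=> /(edge_neq e_irr) vu /(edge_neq e_irr) vu'.
  by apply: set2r_inj; rewrite inE eq_sym.
have -> : #|[set g in disjoint_edges f | v \in val g]|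
        = #|[set A in edges e | (val f :&: A == set0) && (v \in A)]|.
  by rewrite -card_line_vertex_set; apply: eq_card => g; rewrite !inE.
apply/subset_leq_card/subsetP => A /imsetP[u + ->].
move=> /setDP[+ uNf]; rewrite inE => evu.
apply/setIdP; split; first by apply/edgesP; exists v, u.
rewrite !inE eqxx andbT; apply/eqP/setP => z; rewrite !inE.
by apply/andP => -[zf /orP[] /eqP eq_z]; [move: vNf | move: uNf]; rewrite -eq_z zf.
Qed.

Lemma nedges_le_avoiding_add_deg : nedges e <= #|edges_avoiding| + deg e v.
Proof.
rewrite -card_line_vertex -(cardsC edges_avoiding) leq_add2l.
have -> : #|~: edges_avoiding| = #|[set A in edges e | v \in A]|.
  by rewrite -card_line_vertex_set; apply: eq_card => f; rewrite !inE negbK.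
apply: leq_trans (leq_imset_card (fun u => [set v; u]) [set u | e v u]).
apply/subset_leq_card/subsetP => A /setIdP[/edgesP[x [y [exy ->]]]].
case/set2P=> ->; apply/imsetP.
  by exists y; rewrite ?inE.
by exists x; rewrite ?inE 1?e_sym // setUC.
Qed.

Lemma avoiding_deg_le_sum_disjoint :
  2 * (#|edges_avoiding| * (deg e v - 2)) <= \sum_f #|disjoint_edges f|.
Proof.
pose c (f g : line_vertex e) : nat :=
  [&& v \notin val f, v \in val g & g \in disjoint_edges f].
have c_add_swap (f g : line_vertex e) : c f g + c g f <= (g \in disjoint_edges f).
  rewrite /c !inE (setIC (val g)).
  by case: (v \in val f); case: (v \in val g); case: (_ == set0).
have sum_c : #|edges_avoiding| * (deg e v - 2) <= \sum_f \sum_g c f g.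
  rewrite -sum_nat_const big_mkcond /=; apply: leq_sum => f _; rewrite inE.
  case: ifP => // vNf; apply: leq_trans (deg_sub2_le_disjoint_at vNf) _.
  rewrite -sum1_card big_mkcond; apply/eq_leq/eq_bigr => g _.
  by rewrite /c vNf !inE andbC.
rewrite mul2n -addnn (leq_trans (leq_add sum_c sum_c)) //.
rewrite [X in _ + X]exchange_big -big_split; apply: leq_sum => f _.
rewrite -big_split -sum1_card [leqRHS]big_mkcond /=.
by apply: leq_sum => g _; exact: c_add_swap.
Qed.

Lemma double_line_nedges_add_avoiding_le :
  2 * nedges (line_rel e) + 2 * (#|edges_avoiding| * (deg e v - 2))
  <= nedges e * (nedges e).-1.
Proof.
have [line_sym line_irr] := line_graph_simple.
have -> : nedges e * (nedges e).-1
        = \sum_f (deg (line_rel e) f + #|disjoint_edges f|).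
  rewrite -card_line_vertex -sum_nat_const; apply: eq_bigr => f _.
  by rewrite deg_line_add_disjoint card_line_vertex.
rewrite big_split.
exact: leq_add (double_nedges_le_sum_deg line_sym line_irr)
               avoiding_deg_le_sum_disjoint.
Qed.

End LineGraph.

Local Open Scope ring_scope.

Lemma natrM_pred (R : pzRingType) (n : nat) : (n * n.-1)%:R = n%:R * (n%:R - 1) :> R.
Proof. by case: n => [|n]; rewrite ?mul0n ?mulr0n ?mul0r // natrM mulrSr addrK. Qed.

Theorem corollary2p2 (R : rcfType) (T : finType) (e : rel T) :
  simple_graph e -> nontrivial e ->
  let m : R := (nedges e)%:R in
  let D : R := (maxdeg e)%:R in
  GA1 R e + GA1 R (line_rel e) <=
    (Num.max (Num.max
       (2 * D ^+ 2 + m ^+ 2 + (6 - 2 * D) * m - 2 * D - 4)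
       (2 * D ^+ 2 + m ^+ 2 + (4 - 2 * D) * m + 4))
       (m * (m - 1))) / 2.
Proof.
move=> [e_sym e_irr] _; cbv zeta.
set m : R := (nedges e)%:R; set D : R := (maxdeg e)%:R.
have [_ line_irr] := line_graph_simple e.
apply: le_trans (lerD (GA1_le_nedges e_irr R) (GA1_le_nedges line_irr R)) _.
rewrite ler_pdivlMr ?ltr0n // -/m !le_max.
have m_ge0 : 0 <= m by rewrite ler0n.
have [maxdeg_le1 | maxdeg_ge2] := leqP (maxdeg e) 1.
  have := double_line_nedges_le e.
  rewrite -(ler_nat R) natrM_pred natrM -/m => lineE.
  have D_le1 : D <= 1 by rewrite lern1.
  have D_ge0 : 0 <= D by rewrite ler0n.
  apply/orP; left; apply/orP; right; nra.
have [v degv] := maxdeg_attained (ltnW maxdeg_ge2).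
have := double_line_nedges_add_avoiding_le e_irr v.
have := nedges_le_avoiding_add_deg e_sym v.
rewrite degv; set X := #|_|.
rewrite -!(ler_nat R) natrM_pred !natrD !natrM natrB // -/m -/D => mX lineE.
have D_ge2 : 2 <= D by rewrite (ler_nat R 2).
have excess : 0 <= (X%:R - (m - D)) * (D - 2) by apply: mulr_ge0; lra.
apply/orP; left; apply/orP; left; nra.
Qed.
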